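(* Let $(X,d)$ be a complete metric space and let $G:X\times X\to X$ be a mapping such that (i) $G(x,x)=x$ for all $x\in X$, and (ii) for $x,y\in X$, $G(x,y)=x$ implies $y=x$. Let $T:X\to P_{cl}(X)$ be a multivalued operator with $SFix(T)\neq\emptyset$, let $x^*\in SFix(T)$, and let $T_G:X\to P(X)$, $T_G(x)=\{G(x,u):u\in T(x)\}$, be the admissible perturbation of $T$ corresponding to $G$. Suppose there exists $l\in(0,1)$ such that $$H(T(x),\{x^*\})\le l\,H(T_G(x),\{x^*\})\quad\text{for all }x\in X.$$ Then $$H(T(Y),\{x^*\})\le l\,H(T_G(Y),\{x^*\})\quad\text{for all }Y\in P_{cl}(X).$$
   Context: $P(X)$ denotes the family of nonempty subsets of $X$ and $P_{cl}(X)$ the family of nonempty closed subsets. $SFix(T)=\{x\in X:T(x)=\{x\}\}$ is the set of strict fixed points. For $A,B\in P(X)$: $D(a,B)=\inf\{d(a,b):b\in B\}$, $e(A,B)=\sup\{D(a,B):a\in A\}$, and the Pompeiu–Hausdorff functional is $H(A,B)=\max\{e(A,B),e(B,A)\}$ (possibly $+\infty$). For $Y\subseteq X$, $T(Y)=\bigcup_{y\in Y}T(y)$ and $T_G(Y)=\bigcup_{y\in Y}T_G(y)$. *)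

From HB Require Import structures.
From mathcomp Require Import all_boot all_order all_algebra.
From mathcomp Require Import all_classical all_reals.
From mathcomp Require Import ereal.
Set Implicit Arguments. Unset Strict Implicit. Unset Printing Implicit Defensive.
Import Order.TTheory GRing.Theory Num.Theory.
Local Open Scope classical_set_scope.
Local Open Scope ring_scope.

Section Defs.
Variables (R : realType) (X : Type) (d : X -> X -> R).

Definition is_metric : Prop :=
  (forall x y, 0 <= d x y) /\ (forall x y, d x y = 0 <-> x = y) /\
  (forall x y, d x y = d y x) /\ (forall x y z, d x z <= d x y + d y z).

Definition d_converges (u : nat -> X) (x : X) : Prop :=
  forall eps : R, 0 < eps -> exists N : nat, forall n, (N <= n)%N -> d (u n) x < eps.
Definition d_cauchy (u : nat -> X) : Prop :=
  forall eps : R, 0 < eps -> exists N : nat, forall n m, (N <= n)%N -> (N <= m)%N ->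
    d (u n) (u m) < eps.
Definition is_complete : Prop :=
  forall u : nat -> X, d_cauchy u -> exists x, d_converges u x.

Definition d_closed (A : set X) : Prop :=
  forall (u : nat -> X) (x : X), (forall n, A (u n)) -> d_converges u x -> A x.

Definition Pcl (A : set X) : Prop := A !=set0 /\ d_closed A.

Definition Dist (a : X) (B : set X) : \bar R :=
  ereal_inf [set (d a b)%:E | b in B].
Definition excess (A B : set X) : \bar R :=
  ereal_sup [set Dist a B | a in A].
Definition Hpom (A B : set X) : \bar R := Order.max (excess A B) (excess B A).

Definition SFix (T : X -> set X) : set X := [set x | T x = [set x]].

Definition TG (G : X -> X -> X) (T : X -> set X) (x : X) : set X :=
  [set G x u | u in T x].

Definition mimage (T : X -> set X) (Y : set X) : set X :=
  \bigcup_(y in Y) T y.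
End Defs.

From mathcomp Require Import all_boot all_order all_algebra.
From mathcomp Require Import all_classical all_reals.
From mathcomp Require Import ereal.
Import Order.TTheory GRing.Theory Num.Theory.
Local Open Scope classical_set_scope.
Local Open Scope ring_scope.

(* For nonempty A and symmetric d, H(A,{xs}) = e(A,{xs}) = sup_(a in A) d(a,xs), and
   the excess of a union is dominated by any common bound of the excesses of its
   members. Hence the pointwise hypothesis at y in Y, together with T_G(y) being part
   of T_G(Y), bounds e(T(Y),{xs}) by l e(T_G(Y),{xs}). *)

Section Excess.
Variables (R : realType) (X : Type) (d : X -> X -> R).

Lemma Dist_set1 (a x : X) : Dist d a [set x] = (d a x)%:E.
Proof. by rewrite /Dist image_set1 ereal_inf1. Qed.

Lemma excess_subset (A A' B : set X) :
  A `<=` A' -> (excess d A B <= excess d A' B)%E.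
Proof.
by move=> AA'; apply: ereal_sup_le => _ [a Aa <-]; exists a => //; exact: AA'.
Qed.

Lemma excess_bigcup_le (I : Type) (Y : set I) (A : I -> set X) (B : set X)
    (c : \bar R) :
  (forall i, Y i -> (excess d (A i) B <= c)%E) ->
  (excess d (\bigcup_(i in Y) A i) B <= c)%E.
Proof.
move=> leAc; apply: ge_ereal_sup => _ [a [i Yi Aia] <-].
by apply: le_trans (leAc i Yi); apply: ereal_sup_ubound; exists a.
Qed.

Hypothesis dC : forall x y, d x y = d y x.

Lemma excess_set1l_le (A : set X) (x : X) :
  A !=set0 -> (excess d [set x] A <= excess d A [set x])%E.
Proof.
case=> a Aa; rewrite /excess image_set1 ereal_sup1.
apply: (@le_trans _ _ (Dist d a [set x])).
  by rewrite Dist_set1 dC; apply: ereal_inf_lbound; exists a.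
by apply: ereal_sup_ubound; exists a.
Qed.

Lemma Hpom_set1r (A : set X) (x : X) :
  A !=set0 -> Hpom d A [set x] = excess d A [set x].
Proof. by move=> A0; apply/max_idPl; exact: excess_set1l_le. Qed.

End Excess.

Theorem mainTheorem1 (R : realType) (X : Type) (d : X -> X -> R)
  (hd : is_metric d) (hc : is_complete d)
  (G : X -> X -> X)
  (hG1 : forall x, G x x = x)
  (hG2 : forall x y, G x y = x -> y = x)
  (T : X -> set X) (hT : forall x, Pcl d (T x))
  (hS : SFix T !=set0)
  (xs : X) (hxs : SFix T xs)
  (l : R) (hl0 : 0 < l) (hl1 : l < 1)
  (hyp : forall x, (Hpom d (T x) [set xs] <= l%:E * Hpom d (TG G T x) [set xs])%E) :
  forall Y : set X, Pcl d Y ->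
    (Hpom d (mimage T Y) [set xs] <= l%:E * Hpom d (mimage (TG G T) Y) [set xs])%E.
Proof.
have dC : forall x y, d x y = d y x by case: hd => _ [_ []].
move=> Y [[y0 Yy0] _].
have T0 y : T y !=set0 by case: (hT y).
have TG0 y : TG G T y !=set0 by case: (T0 y) => u Tu; exists (G y u), u.
have TY0 : mimage T Y !=set0 by case: (T0 y0) => u Tu; exists u, y0.
have TGY0 : mimage (TG G T) Y !=set0 by case: (TG0 y0) => u Tu; exists u, y0.
rewrite !Hpom_set1r //; apply: excess_bigcup_le => y Yy.
rewrite -Hpom_set1r //; apply: le_trans (hyp y) _.
apply: lee_wpmul2l; first by rewrite lee_fin ltW.
by rewrite Hpom_set1r //; apply: excess_subset; exact: bigcup_sup.
Qed.
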